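(* Let $K$ be a finitely generated abelian group and $S=\mathbb{K}[T_1,\dots,T_r]$ a $K$-graded polynomial ring with homogeneous variables whose grading is effective and pointed, let $I\subseteq S$ be a homogeneous ideal, and let $G:=\operatorname{Aut}_K(S)$. Then the vector subspaces $V:=\bigoplus_{w\in\Omega_S}S_w$ and $W:=\bigoplus_{u\in\Omega_I}S_u$ of $S$ are finite-dimensional, $V$ is invariant under the linear action of $G$ on $S$, and the induced representation $G\to\operatorname{GL}(V)$ is faithful.
   Context: $\mathbb{K}$ algebraically closed of characteristic zero. $\operatorname{Aut}_K(S)$ is the group of graded automorphisms $(\varphi,\psi)$ ($\varphi(S_w)=S_{\psi(w)}$, $\psi\in\operatorname{Aut}(K)$), acting on $S$ by $f\mapsto\varphi(f)$. Effective: $\omega(S)=\{w;\ S_w\ne0\}$ generates $K$; pointed: $S_0=\mathbb{K}$ and the cone generated by $\omega(S)$ in $K\otimes\mathbb{Q}$ contains no line. $w'\le w$ iff $w-w'\in\omega(S)$. $\Omega_S:=\{w\in\omega(S);\ S_w\not\subseteq S_{<w}\}$ where $S_{<w}$ is the subalgebra generated by all $S_{w'}$ with $w'<w$; for a homogeneous ideal $I$, $\Omega_I:=\{w;\ I_w\not\subseteq I_{<w}\}$ where $I_{<w}$ is the ideal generated by all $I_{w'}=I\cap S_{w'}$, $w'<w$. *)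

From HB Require Import structures.
From mathcomp Require Import all_boot all_order all_algebra.
From mathcomp Require Import mpoly.
Set Implicit Arguments. Unset Strict Implicit. Unset Printing Implicit Defensive.
Import GRing.Theory.
Local Open Scope ring_scope.

Section Defs.
Variables (F : closedFieldType) (K : zmodType) (r : nat) (deg : 'I_r -> K).
Local Notation S := {mpoly F[r]}.

Definition fin_gen_group : Prop :=
  exists gens : seq K, forall k : K,
    exists z : 'I_(size gens) -> int, k = \sum_(i < size gens) gens`_i *~ z i.

Definition mdegK (m : 'X_{1..r}) : K := \sum_(i < r) deg i *+ m i.

Definition homogK (w : K) (p : S) : Prop :=
  forall m, m \in msupp p -> mdegK m = w.

Definition omegaS (w : K) : Prop := exists p : S, p != 0 /\ homogK w p.

Definition leK (w' w : K) : Prop := omegaS (w - w').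
Definition ltK (w' w : K) : Prop := leK w' w /\ w' <> w.

Definition effective : Prop :=
  forall k : K, exists s : seq K, (forall x, x \in s -> omegaS x) /\
    exists z : 'I_(size s) -> int, k = \sum_(i < size s) s`_i *~ z i.

(* k is zero in K (x) Q *)
Definition torsion (k : K) : Prop := exists n : nat, (0 < n)%N /\ k *+ n = 0.

(* the image of k in K (x) Q lies in the (rational convex) cone generated
   by omega(S): d * k = sum of c_i * w_i in K (x) Q, with d > 0, c_i >= 0 *)
Definition in_cone (k : K) : Prop :=
  exists (d : nat) (s : seq (K * nat)), (0 < d)%N /\
    (forall x, x \in s -> omegaS x.1) /\
    torsion (k *+ d - \sum_(x <- s) x.1 *+ x.2).

(* pointed: S_0 = constants, and the cone contains no line *)
Definition pointed : Prop :=
  (forall p : S, homogK 0 p -> exists c : F, p = c%:MP) /\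
  (forall k : K, in_cone k -> in_cone (- k) -> torsion k).

Definition subalg_gen (A : S -> Prop) (p : S) : Prop :=
  forall B : S -> Prop,
    (forall c : F, B c%:MP) ->
    (forall q1 q2, B q1 -> B q2 -> B (q1 + q2)) ->
    (forall q1 q2, B q1 -> B q2 -> B (q1 * q2)) ->
    (forall (c : F) q, B q -> B (c *: q)) ->
    (forall q, A q -> B q) -> B p.

Definition is_ideal (J : S -> Prop) : Prop :=
  [/\ J 0, (forall q1 q2, J q1 -> J q2 -> J (q1 + q2)) &
      (forall a q, J q -> J (a * q))].

Definition ideal_gen (A : S -> Prop) (p : S) : Prop :=
  forall J : S -> Prop, is_ideal J -> (forall q, A q -> J q) -> J p.

Definition hcomp (w : K) (p : S) : S :=
  \sum_(m <- msupp p | mdegK m == w) p@_m *: 'X_[m].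

Definition homog_ideal (I : S -> Prop) : Prop :=
  is_ideal I /\ forall p w, I p -> I (hcomp w p).

Definition S_lt (w : K) : S -> Prop :=
  subalg_gen (fun q => exists w', ltK w' w /\ homogK w' q).

Definition OmegaS (w : K) : Prop :=
  omegaS w /\ exists p, homogK w p /\ ~ S_lt w p.

Definition I_lt (I : S -> Prop) (w : K) : S -> Prop :=
  ideal_gen (fun q => I q /\ exists w', ltK w' w /\ homogK w' q).

Definition OmegaI (I : S -> Prop) (w : K) : Prop :=
  exists p, I p /\ homogK w p /\ ~ I_lt I w p.

Definition dsum (P : K -> Prop) (p : S) : Prop :=
  exists s : seq (K * S), (forall x, x \in s -> P x.1 /\ homogK x.1 x.2) /\
    p = \sum_(x <- s) x.2.

Definition fin_dim (P : S -> Prop) : Prop :=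
  exists s : seq S, forall p, P p ->
    exists c : 'I_(size s) -> F, p = \sum_(i < size s) c i *: s`_i.

Definition graded_aut (phi : S -> S) (psi : K -> K) : Prop :=
  (forall p q, phi (p + q) = phi p + phi q) /\
  (forall p q, phi (p * q) = phi p * phi q) /\
  phi 1 = 1 /\
  (forall (c : F) p, phi (c *: p) = c *: phi p) /\
  bijective phi /\
  (forall a b, psi (a + b) = psi a + psi b) /\
  bijective psi /\
  (forall w : K, (forall p, homogK w p -> homogK (psi w) (phi p)) /\
     (forall q, homogK (psi w) q -> exists p, homogK w p /\ phi p = q)).

End Defs.

From HB Require Import structures.
From mathcomp Require Import all_boot all_order all_algebra.
From mathcomp Require Import mpoly.
From Pilot Require Import Defs.
From Stdlib Require Import Classical IndefiniteDescription.
Set Implicit Arguments.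
Unset Strict Implicit.
Unset Printing Implicit Defensive.
Import Order.TTheory GRing.Theory.

(* Finiteness comes from Dickson's lemma: every set of exponent vectors has
   finitely many minimal elements.  As S_0 consists of the constants, no
   nonconstant monomial has degree 0, so the monomials of a given degree are
   exactly the minimal ones; hence each S_w is finite dimensional.  Omega_S
   consists of degrees of variables: a monomial of another degree w factors
   as T_j times a monomial, both of degree < w.  Omega_I lies among the
   degrees of the minimal leading monomials of I: an element of I of any
   other degree u reduces to 0 modulo I_{<u} by repeatedly cancelling its
   leading term against a minimal one.  A graded automorphism (phi, psi)
   maps S_{<w} into S_{<psi w}, and so does its inverse, so psi permutes
   Omega_S and phi preserves V.  If phi fixes V it fixes every variable T_i (deg T_i lies in
   Omega_S), hence phi = id; then psi fixes omega(S), which generates K. *)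

Lemma exists_min_from (f : nat -> nat) (n : nat) :
  exists k, n <= k /\ forall j, n <= j -> f k <= f j.
Proof.
suff min_from v : forall j, n <= j -> f j = v ->
    exists k, n <= k /\ forall j, n <= j -> f k <= f j.
  exact: (min_from _ n (leqnn n) erefl).
elim/ltn_ind: v => v IH j le_nj fj.
have [[j' [le_nj' lt_j'v]] | no_smaller] :=
  classic (exists j', n <= j' /\ f j' < v).
  exact: (IH (f j') lt_j'v j' le_nj' erefl).
exists j; split=> // j' le_nj'; rewrite fj leqNgt; apply/negP => lt_j'v.
by apply: no_smaller; exists j'.
Qed.

Lemma nondecreasing_subseq (f : nat -> nat) :
  exists s : nat -> nat, (forall i, s i < s i.+1) /\ (forall i, f (s i) <= f (s i.+1)).
Proof.
have [g Hg] : exists g : nat -> nat,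
    forall n, n <= g n /\ forall j, n <= j -> f (g n) <= f j.
  exists (fun n => sval (constructive_indefinite_description _ (exists_min_from f n))).
  by move=> n; case: constructive_indefinite_description.
pose s := fix s i := if i is i'.+1 then g (s i').+1 else g 0.
exists s; split=> i; first by case: (Hg (s i).+1).
have [n [le_nsi min_n]] : exists n, n <= s i /\ forall j, n <= j -> f (s i) <= f j.
  by case: i => [|i] /=; [exists 0 | exists (s i).+1]; apply: Hg.
by apply: min_n; apply: leq_trans le_nsi (ltnW _); case: (Hg (s i).+1).
Qed.

Section Dickson.
Variable n : nat.
Local Notation M := 'X_{1..n}.

Lemma dickson_prefix (k : nat) (f : nat -> M) :
  exists s : nat -> nat, (forall i, s i < s i.+1) /\
    forall j : 'I_n, j < k -> forall i, f (s i) j <= f (s i.+1) j.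
Proof.
elim: k => [|k [s [incr_s mono_s]]]; first by exists id.
have [le_nk | lt_kn] := leqP n k.
  by exists s; split=> // j _; apply: mono_s; apply: leq_trans (ltn_ord j) le_nk.
have [t [incr_t mono_t]] := nondecreasing_subseq (fun i => f (s i) (Ordinal lt_kn)).
have homo_s := homo_ltn ltn_trans incr_s.
exists (s \o t); split=> [i|j]; first exact: homo_s.
rewrite ltnS leq_eqVlt => /orP [/eqP ej i | lt_jk i] /=.
  by have -> : j = Ordinal lt_kn by apply: val_inj.
by apply: (homo_leq leqnn leq_trans (mono_s j lt_jk)); apply: ltnW.
Qed.

Lemma dickson (f : nat -> M) : exists i j, i < j /\ (f i <= f j)%MM.
Proof.
have [s [incr_s mono_s]] := dickson_prefix n f.
by exists (s 0), (s 1); split=> //; apply/mnm_lepP => j; apply: mono_s.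
Qed.

Lemma dickson_basis (P : M -> Prop) :
  exists s : seq M, (forall b, b \in s -> P b) /\
    forall m, P m -> exists2 b, b \in s & (b <= m)%MM.
Proof.
apply: NNPP => no_basis.
have next (s : seq M) : exists m, (forall b, b \in s -> P b) ->
    P m /\ forall b, b \in s -> ~ (b <= m)%MM.
  have [sP | not_sP] := classic (forall b, b \in s -> P b); last by exists 0%MM.
  apply: NNPP => no_next; apply: no_basis; exists s; split=> // m Pm.
  apply: NNPP => no_b; apply: no_next; exists m => _; split=> // b bs le_bm.
  by apply: no_b; exists b.
pose h s := sval (constructive_indefinite_description _ (next s)).
have hP s : (forall b, b \in s -> P b) ->
    P (h s) /\ forall b, b \in s -> ~ (b <= h s)%MM.
  by rewrite /h; case: constructive_indefinite_description.
pose seqs k := iter k (fun s => rcons s (h s)) [::].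
have seqsP k b : b \in seqs k -> P b.
  elim: k b => [|k IH] b //=; rewrite mem_rcons inE => /predU1P [->|]; last exact: IH.
  by case: (hP _ IH).
have h_seqs i j : i < j -> h (seqs i) \in seqs j.
  elim: j => [|j IH] //; rewrite ltnS leq_eqVlt => /predU1P [->|lt_ij] /=;
    by rewrite mem_rcons inE ?eqxx ?IH ?orbT.
have [i [j [lt_ij le_ij]]] := dickson (fun k => h (seqs k)).
by have [_ /(_ _ (h_seqs _ _ lt_ij))] := hP _ (seqsP j).
Qed.

End Dickson.

Local Open Scope ring_scope.

Section Span.
Variables (R : pzRingType) (V : lmodType R).

Definition in_span (s : seq V) (v : V) :=
  exists c : 'I_(size s) -> R, v = \sum_(i < size s) c i *: s`_i.

Lemma in_span0 s : in_span s 0.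
Proof. by exists (fun _ => 0); rewrite big1 // => i _; rewrite scale0r. Qed.

Lemma in_spanD s u v : in_span s u -> in_span s v -> in_span s (u + v).
Proof.
move=> [c ->] [d ->]; exists (fun i => c i + d i).
by rewrite -big_split; apply: eq_bigr => i _; rewrite scalerDl.
Qed.

Lemma in_spanZ s a v : in_span s v -> in_span s (a *: v).
Proof.
move=> [c ->]; exists (fun i => a * c i).
by rewrite scaler_sumr; apply: eq_bigr => i _; rewrite scalerA.
Qed.

Lemma in_span_nth (s : seq V) k : (k < size s)%N -> in_span s s`_k.
Proof.
move=> lt_ks; exists (fun i => ((i : nat) == k)%:R).
rewrite (bigD1 (Ordinal lt_ks)) //= eqxx scale1r big1 ?addr0 // => i /eqP ne_ik.
suff /negbTE -> : (i : nat) != k by rewrite scale0r.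
by apply/eqP => eq_ik; apply: ne_ik; apply: val_inj.
Qed.

Lemma in_span_sum s (T : eqType) (l : seq T) (f : T -> V) :
  (forall x, x \in l -> in_span s (f x)) -> in_span s (\sum_(x <- l) f x).
Proof.
elim: l => [|x l IH] fl; first by rewrite big_nil; apply: in_span0.
rewrite big_cons; apply: in_spanD; first by apply: fl; rewrite mem_head.
by apply: IH => y yl; apply: fl; rewrite inE yl orbT.
Qed.

End Span.

Lemma mlead_cancel (R : fieldType) (n : nat) (f g : {mpoly R[n]}) :
  g != 0 -> (mlead g <= mlead f)%MM ->
  let h := (mleadc f / mleadc g) *: ('X_[mlead f - mlead g] * g) in
  f - h != 0 -> (mlead (f - h) < mlead f)%O.
Proof.
move=> nz_g le_gf h nz_fh.
have lcX : mleadc ('X_[mlead f - mlead g] : {mpoly R[n]}) * mleadc g != 0.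
  by rewrite mleadXm mcoeffX eqxx mul1r mleadc_eq0.
have lead_Xg : mlead ('X_[mlead f - mlead g] * g) = mlead f.
  by rewrite mleadM_proper // mleadXm submK.
have coef_h : h@_(mlead f) = mleadc f.
  rewrite mcoeffZ -{2}lead_Xg mleadcM_proper // mleadXm mcoeffX eqxx mul1r.
  by rewrite divfK ?mleadc_eq0.
have le_fh_f : (mlead (f - h) <= mlead f)%O.
  apply: le_trans (mleadB_le _ _) _; rewrite leUx lexx /=.
  by rewrite /h -[X in (_ <= X)%O]lead_Xg mleadZ_le.
rewrite lt_neqAle le_fh_f andbT; apply: contra nz_fh => /eqP lead_fh.
by rewrite -mleadc_eq0 lead_fh mcoeffB coef_h subrr.
Qed.

Section Grading.
Variables (F : closedFieldType) (K : zmodType) (r : nat) (deg : 'I_r -> K).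
Local Notation S := {mpoly F[r]}.
Local Notation mdegK := (mdegK deg).
Local Notation homogK := (homogK deg).

Lemma mdegKD m1 m2 : mdegK (m1 + m2)%MM = mdegK m1 + mdegK m2.
Proof. by rewrite -big_split; apply: eq_bigr => i _; rewrite mnmDE mulrnDr. Qed.

Lemma mdegKU i : mdegK U_(i)%MM = deg i.
Proof.
rewrite /Defs.mdegK (bigD1 i) //= mnm1E eqxx big1 ?addr0 // => j ne_ji.
by rewrite mnm1E eq_sym (negbTE ne_ji).
Qed.

Lemma homogX m : homogK (mdegK m) ('X_[m] : S).
Proof. by move=> m'; rewrite msuppX inE => /eqP ->. Qed.

Lemma homogXi i : homogK (deg i) ('X_i : S).
Proof. by rewrite -mdegKU; apply: homogX. Qed.

Lemma homogD w (p q : S) : homogK w p -> homogK w q -> homogK w (p + q).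
Proof. by move=> hp hq m /msuppD_le; rewrite mem_cat => /orP [/hp | /hq]. Qed.

Lemma homogZ w c (p : S) : homogK w p -> homogK w (c *: p).
Proof. by move=> hp m /msuppZ_le /hp. Qed.

Lemma homogN w (p : S) : homogK w p -> homogK w (- p).
Proof. by move=> hp m; rewrite (perm_mem (msuppN p)) => /hp. Qed.

Lemma homogM w1 w2 (p q : S) :
  homogK w1 p -> homogK w2 q -> homogK (w1 + w2) (p * q).
Proof.
move=> hp hq m /msuppM_le /allpairsP [[m1 m2] [/= /hp <- /hq <- ->]].
exact: mdegKD.
Qed.

Lemma homog_mcoeff_eq0 w (q : S) m : homogK w q -> mdegK m != w -> q@_m = 0.
Proof.
by move=> hq ne_mw; apply/eqP; rewrite mcoeff_eq0; apply: contra ne_mw => /hq ->.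
Qed.

Lemma mpolyX_neq0 m : 'X_[m] != 0 :> S.
Proof. by rewrite -msupp_eq0 msuppX. Qed.

Lemma mpolyX_eqC m (c : F) : 'X_[m] = c%:MP :> S -> m = 0%MM.
Proof.
move=> eXc; have := mcoeffX F m m; rewrite eXc mcoeffC eqxx.
by case: eqP => // _; rewrite mulr0 => /eqP; rewrite eq_sym oner_eq0.
Qed.

Lemma dsum_homog (P : K -> Prop) w (p : S) : P w -> homogK w p -> dsum deg P p.
Proof.
by move=> Pw homp; exists [:: (w, p)]; rewrite big_seq1; split=> // x /[1!inE] /eqP ->.
Qed.

End Grading.

Section Generated.
Variables (F : closedFieldType) (r : nat) (A : {mpoly F[r]} -> Prop).
Local Notation S := {mpoly F[r]}.

Lemma subalg_genC c : subalg_gen A c%:MP.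
Proof. by move=> B BC *; apply: BC. Qed.

Lemma subalg_genD p q : subalg_gen A p -> subalg_gen A q -> subalg_gen A (p + q).
Proof. by move=> Ap Aq B BC BD BM BZ BA; apply: (BD); [apply: Ap | apply: Aq]. Qed.

Lemma subalg_genM p q : subalg_gen A p -> subalg_gen A q -> subalg_gen A (p * q).
Proof. by move=> Ap Aq B BC BD BM BZ BA; apply: (BM); [apply: Ap | apply: Aq]. Qed.

Lemma subalg_genZ c p : subalg_gen A p -> subalg_gen A (c *: p).
Proof. by move=> Ap B BC BD BM BZ BA; apply: (BZ); apply: Ap. Qed.

Lemma subalg_gen_base p : A p -> subalg_gen A p.
Proof. by move=> Ap B BC BD BM BZ; apply. Qed.

Lemma subalg_gen_sum (T : eqType) (l : seq T) (f : T -> S) :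
  (forall x, x \in l -> subalg_gen A (f x)) -> subalg_gen A (\sum_(x <- l) f x).
Proof.
elim: l => [|x l IH] fl; first by rewrite big_nil -mpolyC0; apply: subalg_genC.
rewrite big_cons; apply: subalg_genD; first by apply: fl; rewrite mem_head.
by apply: IH => y yl; apply: fl; rewrite inE yl orbT.
Qed.

Lemma ideal_gen_is_ideal : is_ideal (ideal_gen A).
Proof.
split=> [J [] // | p q Ap Aq J idJ JA | a q Aq J idJ JA].
  by have [_ JD _] := idJ; apply: JD (Ap J idJ JA) (Aq J idJ JA).
by have [_ _ JM] := idJ; apply: JM (Aq J idJ JA).
Qed.

Lemma ideal_gen_base p : A p -> ideal_gen A p.
Proof. by move=> Ap J _; apply. Qed.

End Generated.

Section IdealTheory.
Variables (F : closedFieldType) (r : nat) (J : {mpoly F[r]} -> Prop).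
Hypothesis idJ : is_ideal J.

Lemma ideal0 : J 0.
Proof. by case: idJ. Qed.

Lemma idealD p q : J p -> J q -> J (p + q).
Proof. by case: idJ => _ JD _; apply: JD. Qed.

Lemma idealMl a q : J q -> J (a * q).
Proof. by case: idJ => _ _ JM; apply: JM. Qed.

Lemma idealB p q : J p -> J q -> J (p - q).
Proof. by move=> Jp Jq; rewrite -mulN1r; apply/idealD/idealMl. Qed.

End IdealTheory.

Section Omega.
Variables (F : closedFieldType) (K : zmodType) (r : nat) (deg : 'I_r -> K).
Local Notation S := {mpoly F[r]}.
Local Notation mdegK := (mdegK deg).
Local Notation homogK := (homogK deg).

Lemma omegaS_mdegK m : omegaS F deg (mdegK m).
Proof. by exists 'X_[m]; split; [apply: mpolyX_neq0 | apply: homogX]. Qed.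

Lemma ltK_mdegKDl m1 m2 : mdegK m1 != 0 -> ltK F deg (mdegK m2) (mdegK (m1 + m2)).
Proof.
move=> nz_m1; rewrite /ltK /leK mdegKD addrK; split; first exact: omegaS_mdegK.
by move=> e; move: nz_m1; rewrite -[mdegK m1](addrK (mdegK m2)) -e subrr eqxx.
Qed.

(* q |-> (coefficient of T_i in q) obeys the Leibniz rule at 0, so it vanishes
   on the subalgebra generated by elements homogeneous of degree <> deg T_i. *)
Lemma var_notin_S_lt i : ~ S_lt deg (deg i) ('X_i : S).
Proof.
have coefU (q : S) : q@_U_(i) = (q^`M(i))@_0%MM.
  by rewrite mcoeff_deriv add0m mnm0E mulr1n.
move=> /(_ (fun q : S => q@_U_(i) = 0)) Xi_lt.
have : ('X_i : S)@_U_(i) = 0.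
  apply: Xi_lt.
  - by move=> c; rewrite mcoeffC mnm1_eq0 mulr0.
  - by move=> q1 q2 h1 h2; rewrite mcoeffD h1 h2 addr0.
  - move=> q1 q2 h1 h2; rewrite coefU mderivM mcoeffD.
    rewrite !(fst (mcoeff0_is_multiplicative r F)) -!coefU h1 h2.
    by rewrite mul0r mulr0 addr0.
  - by move=> c q h; rewrite mcoeffZ h mulr0.
  move=> q [w' [[_ ne_w'] hq]]; apply: homog_mcoeff_eq0 hq _.
  by rewrite mdegKU; apply/eqP => /esym.
by rewrite mcoeffXU eqxx mulr1n => /eqP; rewrite oner_eq0.
Qed.

Lemma var_deg_OmegaS i : OmegaS F deg (deg i).
Proof.
split; first by rewrite -mdegKU; apply: omegaS_mdegK.
by exists 'X_i; split; [apply: homogXi | apply: var_notin_S_lt].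
Qed.

Section Pointed.
Hypothesis S0_const : forall p : S, homogK 0 p -> exists c : F, p = c%:MP.

Lemma mdegK_eq0 m : mdegK m = 0 -> m = 0%MM.
Proof.
move=> deg0; have /S0_const [c eXc] : homogK 0 ('X_[m] : S).
  by rewrite -deg0; apply: homogX.
exact: mpolyX_eqC eXc.
Qed.

Lemma mdegK_fiber_finite u : exists ms : seq 'X_{1..r}, forall m, mdegK m = u -> m \in ms.
Proof.
have [s [sP s_basis]] := @dickson_basis r (fun m => mdegK m = u).
exists s => m mu; have [b bs le_bm] := s_basis m mu.
have /eqP : mdegK (m - b)%MM + u = u.
  by rewrite -{1}(sP b bs) -mdegKD submK.
rewrite -subr_eq0 addrK => /eqP /mdegK_eq0 mb0.
by rewrite -(submK le_bm) mb0 add0m.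
Qed.

Lemma fin_dim_dsum (P : K -> Prop) (L : seq K) :
  (forall w, P w -> w \in L) -> fin_dim (dsum (F:=F) deg P).
Proof.
move=> PL; have [ms msP] : exists ms : seq 'X_{1..r},
    forall w m, w \in L -> mdegK m = w -> m \in ms.
  elim: L {PL} => [|u L [ms msP]]; first by exists [::].
  have [ms_u ms_uP] := mdegK_fiber_finite u.
  exists (ms_u ++ ms) => w m; rewrite inE mem_cat => /predU1P [-> /ms_uP -> //|].
  by move=> wL /(msP _ _ wL) ->; rewrite orbT.
exists (map (fun m => 'X_[m] : S) ms) => _ [s [sP ->]].
apply: in_span_sum => x xs; have [Px homx] := sP x xs.
rewrite (mpolyE x.2); apply: in_span_sum => m msupp_m; apply: in_spanZ.
have mms : m \in ms by apply: msP (PL _ Px) (homx _ msupp_m).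
have := @in_span_nth _ _ (map (fun m => 'X_[m] : S) ms) (index m ms).
by rewrite size_map index_mem (nth_map 0%MM) ?index_mem // nth_index //; apply.
Qed.

Lemma homog_S_lt_nonvar w (p : S) :
  (forall j, deg j != w) -> homogK w p -> S_lt deg w p.
Proof.
move=> nonvar homp; rewrite (mpolyE p); apply: subalg_gen_sum => m msupp_m.
apply: subalg_genZ; have mw := homp m msupp_m; rewrite -mw.
have [->|nz_m] := eqVneq m 0%MM.
  by rewrite mpolyX0 -(mpolyC1 r F); apply: subalg_genC.
have /existsP [j mj] : [exists j, m j != 0%N].
  apply: contraR nz_m => /existsPn m0; apply/eqP/mnmP => k.
  by rewrite mnm0E; apply/eqP/negPn/m0.
have le_Um : (U_(j) <= m)%MM by rewrite lep1mP.
rewrite -(submK le_Um) mpolyXD.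
apply: subalg_genM; apply: subalg_gen_base.
- exists (mdegK (m - U_(j))%MM); split; last exact: homogX.
  rewrite addmC; apply: ltK_mdegKDl.
  by apply/eqP => /mdegK_eq0 /eqP; rewrite mnm1_eq0.
- exists (mdegK U_(j)); split; last exact: homogX.
  apply: ltK_mdegKDl; apply: contra (nonvar j) => /eqP /mdegK_eq0 mU0.
  by rewrite -mw -(submK le_Um) mU0 add0m mdegKU.
Qed.

Lemma OmegaS_var_deg w : OmegaS F deg w -> exists i, deg i = w.
Proof.
move=> [_ [p [homp not_lt]]]; apply: NNPP => nonvar; apply: not_lt.
by apply: homog_S_lt_nonvar homp => j; apply/eqP => djw; apply: nonvar; exists j.
Qed.

End Pointed.

Lemma OmegaI_finite (I : S -> Prop) :
  is_ideal I -> exists L : seq K, forall u, OmegaI deg I u -> u \in L.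
Proof.
move=> idI.
pose P m := exists g : S, [/\ I g, g != 0, homogK (mdegK m) g & mlead g = m].
have [s [sP s_basis]] := @dickson_basis r P.
exists (map mdegK s) => u [f0 [If0 [homf0 not_lt]]].
apply: NNPP => uNs; apply: not_lt; move: f0 If0 homf0.
elim/mleadrect => f IH If homf.
have [->|nz_f] := eqVneq f 0; first exact: ideal0 (ideal_gen_is_ideal _).
have lead_f : mdegK (mlead f) = u by apply: homf; apply: mlead_supp.
have [b bs le_bf] : exists2 b, b \in s & (b <= mlead f)%MM.
  by apply: s_basis; exists f; rewrite lead_f.
have [g [Ig nz_g homg lead_g]] := sP b bs.
pose h := (mleadc f / mleadc g) *: ('X_[mlead f - mlead g] * g).
have u_split : mdegK (mlead f - b)%MM + mdegK b = u by rewrite -mdegKD submK.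
have homh : homogK u h.
  by apply: homogZ; rewrite lead_g -u_split; apply: homogM => //; apply: homogX.
have lt_h : I_lt deg I u h.
  rewrite /h scalerAl; apply: (idealMl (ideal_gen_is_ideal _)).
  apply: ideal_gen_base; split=> //; exists (mdegK b); split=> //.
  rewrite -u_split -mdegKD; apply: ltK_mdegKDl.
  by apply/eqP => deg0; apply: uNs; rewrite -u_split deg0 add0r map_f.
rewrite -(subrK h f); apply: idealD lt_h; first exact: ideal_gen_is_ideal.
have [->|nz_fh] := eqVneq (f - h) 0; first exact: ideal0 (ideal_gen_is_ideal _).
apply: IH.
- by apply: (mlead_cancel nz_g) nz_fh; rewrite lead_g.
- by apply: idealB => //; rewrite /h scalerAl; apply: idealMl.
- by apply: homogD => //; apply: homogN.
Qed.

End Omega.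

Section GradedAutomorphism.
Variables (F : closedFieldType) (K : zmodType) (r : nat) (deg : 'I_r -> K).
Local Notation S := {mpoly F[r]}.
Local Notation homogK := (homogK deg).
Variables (phi : S -> S) (psi : K -> K).
Hypothesis aut : graded_aut deg phi psi.

Lemma aut_phiD : {morph phi : p q / p + q}.
Proof. by have [phiD _] := aut. Qed.

Lemma aut_phiM : {morph phi : p q / p * q}.
Proof. by have [_ [phiM _]] := aut. Qed.

Lemma aut_phi1 : phi 1 = 1.
Proof. by have [_ [_ [phi1 _]]] := aut. Qed.

Lemma aut_phiZ c : {morph phi : p / c *: p}.
Proof. by have [_ [_ [_ [phiZ _]]]] := aut. Qed.

Lemma aut_phi_bij : bijective phi.
Proof. by have [_ [_ [_ [_ [phi_bij _]]]]] := aut. Qed.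

Lemma aut_psiD : {morph psi : a b / a + b}.
Proof. by have [_ [_ [_ [_ [_ [psiD _]]]]]] := aut. Qed.

Lemma aut_psi_bij : bijective psi.
Proof. by have [_ [_ [_ [_ [_ [_ [psi_bij _]]]]]]] := aut. Qed.

Lemma aut_homog w p : homogK w p -> homogK (psi w) (phi p).
Proof. by have [_ [_ [_ [_ [_ [_ [_ graded]]]]]]] := aut; apply: (graded w).1. Qed.

Lemma aut_homog_onto w q : homogK (psi w) q -> exists p, homogK w p /\ phi p = q.
Proof. by have [_ [_ [_ [_ [_ [_ [_ graded]]]]]]] := aut; apply: (graded w).2. Qed.

Lemma aut_phiB : zmod_morphism phi.
Proof. by move=> p q; apply: (addIr (phi q)); rewrite -aut_phiD !subrK. Qed.

Definition aut_lrmorphism : {lrmorphism S -> S} :=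
  HB.pack phi (GRing.isZmodMorphism.Build _ _ phi aut_phiB)
    (GRing.isMonoidMorphism.Build _ _ phi (aut_phi1, aut_phiM))
    (GRing.isScalable.Build _ _ _ *:%R phi aut_phiZ).

Lemma aut_psiB : zmod_morphism psi.
Proof. by move=> a b; apply: (addIr (psi b)); rewrite -aut_psiD !subrK. Qed.

Definition aut_additive : {additive K -> K} :=
  HB.pack psi (GRing.isZmodMorphism.Build _ _ psi aut_psiB).

Lemma aut_phiC c : phi c%:MP = c%:MP.
Proof. by rewrite -[phi]/(aut_lrmorphism : S -> S) -alg_mpolyC linearZ rmorph1. Qed.

Lemma aut_omegaS w : omegaS F deg w -> omegaS F deg (psi w).
Proof.
move=> [p [nz_p homp]]; exists (phi p); split; last exact: aut_homog.
apply: contra nz_p => /eqP phi_p0; apply/eqP/(bij_inj aut_phi_bij).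
by rewrite phi_p0; apply/esym/(raddf0 aut_lrmorphism).
Qed.

Lemma aut_ltK w' w : ltK F deg w' w -> ltK F deg (psi w') (psi w).
Proof.
move=> [le_w'w ne_w'w]; split; first by rewrite /leK -aut_psiB; apply: aut_omegaS.
by move=> /(bij_inj aut_psi_bij).
Qed.

Lemma aut_S_lt w p : S_lt deg w p -> S_lt deg (psi w) (phi p).
Proof.
move=> lt_p; apply: (lt_p (fun q => S_lt deg (psi w) (phi q))).
- by move=> c; rewrite aut_phiC; apply: subalg_genC.
- by move=> q1 q2 h1 h2; rewrite aut_phiD; apply: subalg_genD.
- by move=> q1 q2 h1 h2; rewrite aut_phiM; apply: subalg_genM.
- by move=> c q h; rewrite aut_phiZ; apply: subalg_genZ.
move=> q [w' [lt_w'w homq]]; apply: subalg_gen_base.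
by exists (psi w'); split; [apply: aut_ltK | apply: aut_homog].
Qed.

Lemma graded_aut_inv :
  exists g pinv, [/\ graded_aut deg g pinv, cancel phi g & cancel psi pinv].
Proof.
have [g phiK gK] := aut_phi_bij; have [pinv psiK pinvK] := aut_psi_bij.
have inv_morph (T : Type) (f f' : T -> T) op1 op2 :
    cancel f f' -> cancel f' f -> {morph f : x y / op1 x y >-> op2 x y} ->
    {morph f' : x y / op2 x y >-> op1 x y}.
  by move=> fK f'K f_op x y; apply: (can_inj fK); rewrite f_op !f'K.
exists g, pinv; split=> //; do !split.
- exact: inv_morph aut_phiD.
- exact: inv_morph aut_phiM.
- by apply: (can_inj phiK); rewrite gK aut_phi1.
- by move=> c p; apply: (can_inj phiK); rewrite aut_phiZ !gK.
- by exists phi.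
- exact: inv_morph aut_psiD.
- by exists psi.
- move=> p homp; have [|q [homq <-]] := @aut_homog_onto (pinv w) p; first by rewrite pinvK.
  by rewrite phiK.
- move=> q homq; exists (phi q); split; last exact: phiK.
  by rewrite -(pinvK w); apply: aut_homog.
Qed.

Lemma aut_dsum (P : K -> Prop) p :
  (forall w, P w -> P (psi w)) -> dsum deg P p -> dsum deg P (phi p).
Proof.
move=> P_psi [s [sP ->]]; exists (map (fun x => (psi x.1, phi x.2)) s); split.
  move=> _ /mapP [x xs ->] /=; have [Px homx] := sP x xs.
  by split; [apply: P_psi | apply: aut_homog].
by rewrite big_map; apply: (raddf_sum aut_lrmorphism).
Qed.

Lemma aut_fix_vars : (forall i, phi 'X_i = 'X_i) -> forall p, phi p = p.
Proof.
move=> fixX p; rewrite -[phi]/(aut_lrmorphism : S -> S) [X in _ = X]mpolyE {1}(mpolyE p).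
rewrite raddf_sum; apply: eq_bigr => m _ /=; rewrite aut_phiZ mpolyXE_id.
rewrite -[phi]/(aut_lrmorphism : S -> S) rmorph_prod; congr (_ *: _).
by apply: eq_bigr => i _; rewrite rmorphXn /= fixX.
Qed.

Lemma aut_psi_fix : (forall p, phi p = p) -> effective F deg -> forall k, psi k = k.
Proof.
move=> phi_id eff k; have [s [sP [z ->]]] := eff k.
rewrite -[psi]/(aut_additive : K -> K) raddf_sum; apply: eq_bigr => i _.
rewrite raddfMz /=; congr (_ *~ _).
have [p [nz_p homp]] := sP _ (mem_nth 0 (ltn_ord i)).
have := aut_homog homp; rewrite phi_id => homp'.
by rewrite -(homp' _ (mlead_supp nz_p)) (homp _ (mlead_supp nz_p)).
Qed.

End GradedAutomorphism.

Lemma OmegaS_aut (F : closedFieldType) (K : zmodType) (r : nat) (deg : 'I_r -> K)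
    (phi : {mpoly F[r]} -> {mpoly F[r]}) (psi : K -> K) w :
  graded_aut deg phi psi -> OmegaS F deg w -> OmegaS F deg (psi w).
Proof.
move=> aut [omega_w [p [homp not_lt]]]; split; first exact: (aut_omegaS aut omega_w).
exists (phi p); split; first exact: (aut_homog aut homp).
have [g [pinv [aut_inv phiK psiK]]] := graded_aut_inv aut.
by move=> /(aut_S_lt aut_inv); rewrite phiK psiK.
Qed.

Theorem mainTheorem5 (F : closedFieldType) (K : zmodType) (r : nat)
    (deg : 'I_r -> K) (I : {mpoly F[r]} -> Prop) :
  [pchar F] =i pred0 ->
  fin_gen_group K ->
  effective F deg ->
  pointed F deg ->
  homog_ideal deg I ->
  let V := dsum (F:=F) deg (OmegaS F deg) in
  let W := dsum (F:=F) deg (OmegaI deg I) in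
  [/\ fin_dim (F:=F) V, fin_dim (F:=F) W,
      (forall phi psi, graded_aut deg phi psi -> forall p, V p -> V (phi p)) &
      (forall phi psi, graded_aut deg phi psi ->
         (forall p, V p -> phi p = p) ->
         (forall p, phi p = p) /\ (forall k, psi k = k))].
Proof.
move=> _ _ eff [S0_const _] [idI _] V W; rewrite {}/V {}/W; split.
- apply: (fin_dim_dsum S0_const (L := map deg (enum 'I_r))) => w.
  by move=> /(OmegaS_var_deg S0_const) [i <-]; rewrite map_f ?mem_enum.
- have [L OmegaI_L] := OmegaI_finite deg idI.
  exact: (fin_dim_dsum S0_const OmegaI_L).
- by move=> phi psi aut p; apply: (aut_dsum aut) => w; apply: (OmegaS_aut aut).
move=> phi psi aut fixV.
have phi_id : forall p, phi p = p.
  apply: (aut_fix_vars aut) => i; apply: fixV.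
  by apply: (dsum_homog (var_deg_OmegaS F deg i)); apply: homogXi.
by split=> //; apply: (aut_psi_fix aut phi_id eff).
Qed.
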